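(* Let a gyrocircle in the Einstein gyrovector space $\mathbb{R}^n_s$ be given, and let $P$ be a point exterior to it (in its gyroplane). Suppose two gyrosecants of the gyrocircle drawn from $P$ meet the gyrocircle at the points $A_2,A_3$ and at the points $B_2,B_3$, respectively. Then $$\frac{\gamma_{|PA_2|}|PA_2|\,\gamma_{|PA_3|}|PA_3|}{\gamma_{|A_2A_3|}+1}=\frac{\gamma_{|PB_2|}|PB_2|\,\gamma_{|PB_3|}|PB_3|}{\gamma_{|B_2B_3|}+1},$$ where $|XY|=\|\ominus X\oplus Y\|$ denotes gyrodistance and $\gamma_a=(1-a^2/s^2)^{-1/2}$.
   Context: Fix $s>0$, $n\ge2$; $\mathbb{R}^n_s=\{v\in\mathbb{R}^n:\|v\|<s\}$ with Einstein addition $u\oplus v=\frac{1}{1+u\cdot v/s^2}\{u+\frac{1}{\gamma_u}v+\frac{1}{s^2}\frac{\gamma_u}{1+\gamma_u}(u\cdot v)u\}$, $\gamma_v=(1-\|v\|^2/s^2)^{-1/2}$, $\ominus v=-v$. Gyrolines are intersections of Euclidean lines with the ball. A gyroplane is $(A_1\oplus\mathrm{span}\{\ominus A_1\oplus A_2,\ominus A_1\oplus A_3\})\cap\mathbb{R}^n_s$ for $\ominus A_1\oplus A_2,\ominus A_1\oplus A_3$ linearly independent; a gyrocircle with gyrocenter $O$ and gyroradius $r>0$ is the set of points of a gyroplane containing $O$ at gyrodistance $r$ from $O$; its exterior consists of points of that gyroplane at gyrodistance $>r$ from $O$. A gyrosecant is a gyroline meeting the gyrocircle in two different points. *)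

From HB Require Import structures.
From mathcomp Require Import all_boot all_order all_algebra.
From mathcomp Require Import reals.
Set Implicit Arguments. Unset Strict Implicit. Unset Printing Implicit Defensive.
Import Order.TTheory GRing.Theory Num.Theory.
Local Open Scope ring_scope.

Section Einstein.
Variables (R : realType) (n : nat) (s : R).

Definition dotv (u v : 'rV[R]_n) : R := (u *m v^T) 0 0.
Definition normv (v : 'rV[R]_n) : R := Num.sqrt (dotv v v).

Definition in_ball (v : 'rV[R]_n) : Prop := normv v < s.

Definition gam (a : R) : R := (Num.sqrt (1 - a ^+ 2 / s ^+ 2))^-1.
Definition gamv (v : 'rV[R]_n) : R := gam (normv v).

Definition eadd (u v : 'rV[R]_n) : 'rV[R]_n :=
  (1 + dotv u v / s ^+ 2)^-1 *:
    (u + (gamv u)^-1 *: v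
       + (s ^+ 2)^-1 * (gamv u / (1 + gamv u)) * dotv u v *: u).

Definition eopp (v : 'rV[R]_n) : 'rV[R]_n := - v.

Definition gdist (X Y : 'rV[R]_n) : R := normv (eadd (eopp X) Y).

(* gyroline: intersection of the Euclidean line {a + t d} (d <> 0) with the ball *)
Definition gyroline (a d : 'rV[R]_n) : 'rV[R]_n -> Prop :=
  fun x => in_ball x /\ exists t : R, x = a + t *: d.

Definition gyroplane (A1 A2 A3 : 'rV[R]_n) : 'rV[R]_n -> Prop :=
  fun X => in_ball X /\
    exists a b : R,
      X = eadd A1 (a *: eadd (eopp A1) A2 + b *: eadd (eopp A1) A3).

Definition lin_indep2 (u v : 'rV[R]_n) : Prop :=
  forall a b : R, a *: u + b *: v = 0 -> a = 0 /\ b = 0.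

Definition is_gyroplane_data (A1 A2 A3 : 'rV[R]_n) : Prop :=
  [/\ in_ball A1, in_ball A2, in_ball A3 &
      lin_indep2 (eadd (eopp A1) A2) (eadd (eopp A1) A3)].

Definition gyrocircle (Pi : 'rV[R]_n -> Prop) (O : 'rV[R]_n) (r : R)
  : 'rV[R]_n -> Prop := fun X => Pi X /\ gdist O X = r.

Definition gyrocircle_ext (Pi : 'rV[R]_n -> Prop) (O : 'rV[R]_n) (r : R)
  : 'rV[R]_n -> Prop := fun X => Pi X /\ r < gdist O X.

End Einstein.

From HB Require Import structures.
From mathcomp Require Import all_boot all_order all_algebra.
From mathcomp Require Import reals.
From mathcomp Require Import ring lra.
Import Order.TTheory GRing.Theory Num.Theory.
Local Open Scope ring_scope.
Set Implicit Arguments. Unset Strict Implicit.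

(* The gamma factor of the gyrodistance is the Minkowski product of the
   4-velocities, gamma_{|XY|} = gamma_X gamma_Y (1 - X.Y/s^2), so
   gamma_{|XY|} |XY| = s sqrt(gamma_{|XY|}^2 - 1).  If P = (1-l) U + l V lies on
   the Euclidean line UV, the product gamma_P gamma_Y (1 - P.Y/s^2) is affine in
   the weights a = (1-l) gamma_P/gamma_U, b = l gamma_P/gamma_V; the constraint
   gamma_{|PP|} = 1 reads a^2 + b^2 + 2ab gamma_{|UV|} = 1, and for U, V on the
   gyrocircle gamma_{|OP|} = (a + b) gamma_r.  Eliminating a, b and gamma_{|UV|}
   shows that the left-hand side equals
   s^2 |gamma_{|OP|}^2 - gamma_r^2| / (2 gamma_r^2),
   which depends only on P and the gyrocircle: a power of the point. *)

Section Dot.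
Variables (R : realType) (n : nat).
Implicit Types (u v w : 'rV[R]_n).

Lemma dotvE u v : dotv u v = \sum_j u 0 j * v 0 j.
Proof. by rewrite /dotv !mxE; apply: eq_bigr => j _; rewrite mxE. Qed.

Lemma dotvC u v : dotv u v = dotv v u.
Proof. by rewrite !dotvE; apply: eq_bigr => j _; rewrite mulrC. Qed.

Lemma dotvDl u v w : dotv (u + v) w = dotv u w + dotv v w.
Proof. by rewrite /dotv mulmxDl mxE. Qed.

Lemma dotvZl a u v : dotv (a *: u) v = a * dotv u v.
Proof. by rewrite /dotv -scalemxAl mxE. Qed.

Lemma dotvNl u v : dotv (- u) v = - dotv u v.
Proof. by rewrite -scaleN1r dotvZl mulN1r. Qed.

Lemma dotvDr u v w : dotv w (u + v) = dotv w u + dotv w v.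
Proof. by rewrite dotvC dotvDl !(dotvC w). Qed.

Lemma dotvZr a u v : dotv v (a *: u) = a * dotv v u.
Proof. by rewrite dotvC dotvZl dotvC. Qed.

Lemma dotvNr u v : dotv v (- u) = - dotv v u.
Proof. by rewrite dotvC dotvNl dotvC. Qed.

Lemma dotvv_ge0 u : 0 <= dotv u u.
Proof. by rewrite dotvE sumr_ge0 // => j _; rewrite -expr2 sqr_ge0. Qed.

Lemma normv_sqr u : normv u ^+ 2 = dotv u u.
Proof. by rewrite /normv sqr_sqrtr // dotvv_ge0. Qed.

End Dot.

Section Gyrodistance.
Variables (R : realType) (n : nat) (s : R).
Hypothesis s_gt0 : 0 < s.
Implicit Types (X Y Z : 'rV[R]_n).

(* Minkowski product of (1, X/s) and (1, Y/s). *)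
Definition lorentz X Y := 1 - dotv X Y / s ^+ 2.

Definition gamv_rel X Y := gamv s X * gamv s Y * lorentz X Y.

Lemma lorentzC X Y : lorentz X Y = lorentz Y X.
Proof. by rewrite /lorentz dotvC. Qed.

Lemma lorentz_gt0 X Y : in_ball s X -> in_ball s Y -> 0 < lorentz X Y.
Proof.
move=> hX hY.
have dot_lt (Z : 'rV[R]_n) : in_ball s Z -> dotv Z Z < s ^+ 2.
  rewrite /in_ball -normv_sqr => hZ.
  by have := sqrtr_ge0 (dotv Z Z); rewrite -/(normv Z); nra.
have := dotvv_ge0 (X + Y); have := dotvv_ge0 (X - Y).
rewrite !(dotvDl, dotvDr, dotvNl, dotvNr) (dotvC Y X) => hm hp.
rewrite /lorentz subr_gt0 ltr_pdivrMr ?exprn_gt0 // mul1r.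
move: (dot_lt _ hX) (dot_lt _ hY); lra.
Qed.

Lemma gamvE X : gamv s X = (Num.sqrt (lorentz X X))^-1.
Proof. by rewrite /gamv /gam normv_sqr. Qed.

Lemma gamv_gt0 X : in_ball s X -> 0 < gamv s X.
Proof. by move=> hX; rewrite gamvE invr_gt0 sqrtr_gt0 lorentz_gt0. Qed.

Lemma gamvN X : gamv s (- X) = gamv s X.
Proof. by rewrite !gamvE /lorentz dotvNl dotvNr opprK. Qed.

Lemma lorentzvv X : in_ball s X -> lorentz X X = (gamv s X ^+ 2)^-1.
Proof.
move=> hX; rewrite gamvE exprVn invrK sqr_sqrtr //.
exact/ltW/lorentz_gt0.
Qed.

Lemma dotvv_gamv X : in_ball s X -> dotv X X = s ^+ 2 * (1 - (gamv s X ^+ 2)^-1).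
Proof.
move=> hX; rewrite -lorentzvv // /lorentz.
by field; rewrite gt_eqF.
Qed.

Lemma gamv_rel_gt0 X Y : in_ball s X -> in_ball s Y -> 0 < gamv_rel X Y.
Proof. by move=> hX hY; rewrite !mulr_gt0 ?gamv_gt0 ?lorentz_gt0. Qed.

Lemma gdist_sqr X Y : in_ball s X -> in_ball s Y ->
  gdist s X Y ^+ 2 = s ^+ 2 * (1 - (gamv_rel X Y ^+ 2)^-1).
Proof.
move=> hX hY; rewrite /gdist normv_sqr /eadd /eopp gamvN.
rewrite !(dotvZl, dotvZr, dotvDl, dotvDr, dotvNl, dotvNr) (dotvC Y X).
rewrite (dotvv_gamv hX) (dotvv_gamv hY).
have := lorentz_gt0 hX hY; rewrite /gamv_rel /lorentz.
have g0 := gamv_gt0 hX; have h0 := gamv_gt0 hY.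
set g := gamv s X; set h := gamv s Y; set xy := dotv X Y => l0.
have l1 : s ^+ 2 - xy != 0.
  have -> : s ^+ 2 - xy = s ^+ 2 * (1 - xy / s ^+ 2) by field; rewrite gt_eqF.
  by rewrite mulf_neq0 ?gt_eqF ?exprn_gt0.
by field; rewrite l1 !gt_eqF ?addr_gt0.
Qed.

Lemma gamv_rel_ge1 X Y : in_ball s X -> in_ball s Y -> 1 <= gamv_rel X Y.
Proof.
move=> hX hY; have G0 := gamv_rel_gt0 hX hY.
have := sqr_ge0 (gdist s X Y); rewrite gdist_sqr // pmulr_rge0 ?exprn_gt0 //.
by rewrite subr_ge0 invf_le1 ?exprn_gt0 // => ?; nra.
Qed.

Lemma gam_gdist X Y : in_ball s X -> in_ball s Y ->
  gam s (gdist s X Y) = gamv_rel X Y.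
Proof.
move=> hX hY; have G0 := gamv_rel_gt0 hX hY.
rewrite /gam gdist_sqr // mulrC mulKf ?expf_neq0 ?gt_eqF // opprB addrC subrK.
by rewrite -exprVn sqrtr_sqr gtr0_norm ?invrK // invr_gt0.
Qed.

Lemma gam_gdist_mul X Y : in_ball s X -> in_ball s Y ->
  gam s (gdist s X Y) * gdist s X Y = s * Num.sqrt (gamv_rel X Y ^+ 2 - 1).
Proof.
move=> hX hY; have G0 := gamv_rel_gt0 hX hY; have G1 := gamv_rel_ge1 hX hY.
have d0 : 0 <= gdist s X Y by exact: sqrtr_ge0.
have d2 := gdist_sqr hX hY; rewrite gam_gdist //.
move: (gamv_rel X Y) (gdist s X Y) G0 G1 d0 d2 => G d G0 G1 d0 d2.
have lhs_ge0 : 0 <= G * d := mulr_ge0 (ltW G0) d0.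
have rhs_ge0 : 0 <= s * Num.sqrt (G ^+ 2 - 1) := mulr_ge0 (ltW s_gt0) (sqrtr_ge0 _).
apply/eqP; rewrite -(eqrXn2 (_ : 0 < 2)%N) //.
rewrite !exprMn d2 sqr_sqrtr; last by rewrite subr_ge0; nra.
by apply/eqP; field; rewrite gt_eqF.
Qed.
End Gyrodistance.

Lemma secant_product_identity (R : rcfType) (a b d k : R) :
  1 <= d -> 0 < k -> a ^+ 2 + b ^+ 2 + 2 * a * b * d = 1 ->
  Num.sqrt ((a + b * d) ^+ 2 - 1) * Num.sqrt ((a * d + b) ^+ 2 - 1) / (d + 1)
  = `|((a + b) * k) ^+ 2 - k ^+ 2| / (2 * k ^+ 2).
Proof.
set c := a ^+ 2 + b ^+ 2 + 2 * a * b * d => d_ge1 k_gt0 c1.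
have -> : (a + b * d) ^+ 2 - 1 = b ^+ 2 * (d ^+ 2 - 1) + (c - 1) by rewrite /c; ring.
have -> : (a * d + b) ^+ 2 - 1 = a ^+ 2 * (d ^+ 2 - 1) + (c - 1) by rewrite /c; ring.
have -> : ((a + b) * k) ^+ 2 - k ^+ 2
    = - (a * b) * (2 * k ^+ 2 * (d - 1)) + k ^+ 2 * (c - 1) by rewrite /c; ring.
rewrite c1 subrr mulr0 !addr0.
have d2_ge0 : 0 <= d ^+ 2 - 1 by rewrite subr_ge0 exprn_ege1.
rewrite [Num.sqrt (b ^+ 2 * _)]sqrtrM ?sqr_ge0 //.
rewrite [Num.sqrt (a ^+ 2 * _)]sqrtrM ?sqr_ge0 // !sqrtr_sqr normrM normrN.
rewrite [`|2 * _ * _|]ger0_norm; last by have := sqr_ge0 k; nra.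
rewrite mulrACA -expr2 sqr_sqrtr // normrM.
by field; rewrite !gt_eqF //; lra.
Qed.

Lemma line_affine_comb (R : fieldType) (n : nat) (a d P U V : 'rV[R]_n)
    (t0 t2 t3 : R) :
  P = a + t0 *: d -> U = a + t2 *: d -> V = a + t3 *: d -> U != V ->
  exists l : R, P = (1 - l) *: U + l *: V.
Proof.
move=> -> -> -> UV; have t23 : t3 - t2 != 0.
  by apply: contraNneq UV => /subr0_eq ->.
exists ((t0 - t2) / (t3 - t2)).
rewrite !scalerDr !scalerA addrACA -scalerDl subrK scale1r -scalerDl.
by congr (_ + _ *: _); field.
Qed.

Section Power.
Variables (R : realType) (n : nat) (s : R).
Hypothesis s_gt0 : 0 < s.
Implicit Types (O P U V : 'rV[R]_n).

Lemma secant_power O P U V (l k : R) :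
  in_ball s O -> in_ball s P -> in_ball s U -> in_ball s V ->
  P = (1 - l) *: U + l *: V -> gamv_rel s O U = k -> gamv_rel s O V = k ->
  gam s (gdist s P U) * gdist s P U * (gam s (gdist s P V) * gdist s P V)
    / (gam s (gdist s U V) + 1)
  = s ^+ 2 * (`|gamv_rel s O P ^+ 2 - k ^+ 2| / (2 * k ^+ 2)).
Proof.
move=> hO hP hU hV eP OU OV.
rewrite !gam_gdist_mul // gam_gdist //.
have k_gt0 : 0 < k by rewrite -OU gamv_rel_gt0.
have := gamv_gt0 s_gt0 hP; have := gamv_gt0 s_gt0 hU; have := gamv_gt0 s_gt0 hV.
move=> /lt0r_neq0 gV /lt0r_neq0 gU /lt0r_neq0 gP.
have lP Y : lorentz s P Y = (1 - l) * lorentz s U Y + l * lorentz s V Y.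
  by rewrite /lorentz eP dotvDl !dotvZl; ring.
have lPP : lorentz s P P = (1 - l) ^+ 2 * lorentz s U U
    + 2 * l * (1 - l) * lorentz s U V + l ^+ 2 * lorentz s V V.
  by rewrite lP ![lorentz s _ P]lorentzC !lP (lorentzC s V U); ring.
set a := (1 - l) * gamv s P / gamv s U.
set b := l * gamv s P / gamv s V.
set d := gamv_rel s U V.
have PU : gamv_rel s P U = a + b * d.
  rewrite /gamv_rel lP (lorentzvv s_gt0 hU) /d /a /b /gamv_rel (lorentzC s V U).
  by field; rewrite ?gU ?gV ?gP.
have PV : gamv_rel s P V = a * d + b.
  rewrite /gamv_rel lP (lorentzvv s_gt0 hV) /d /a /b /gamv_rel.
  by field; rewrite ?gU ?gV ?gP.
have OP : gamv_rel s O P = (a + b) * k.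
  rewrite mulrDl -{1}OU -OV /gamv_rel (lorentzC s O P) lP.
  by rewrite (lorentzC s U O) (lorentzC s V O) /a /b; field; rewrite ?gU ?gV ?gP.
have unit : a ^+ 2 + b ^+ 2 + 2 * a * b * d = 1.
  rewrite -[RHS](mulfV (expf_neq0 2 gP)) -(lorentzvv s_gt0 hP).
  rewrite lPP (lorentzvv s_gt0 hU) (lorentzvv s_gt0 hV) /a /b /d /gamv_rel.
  by field; rewrite ?gU ?gV ?gP.
rewrite PU PV OP -(secant_product_identity _ k_gt0 unit) ?gamv_rel_ge1 //.
by rewrite /d; ring.
Qed.

Lemma gyrosecant_power O P U V (a d : 'rV[R]_n) (r : R) :
  in_ball s O -> gyroline s a d P -> gyroline s a d U -> gyroline s a d V ->
  U != V -> gdist s O U = r -> gdist s O V = r ->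
  gam s (gdist s P U) * gdist s P U * (gam s (gdist s P V) * gdist s P V)
    / (gam s (gdist s U V) + 1)
  = s ^+ 2 * (`|gamv_rel s O P ^+ 2 - gam s r ^+ 2| / (2 * gam s r ^+ 2)).
Proof.
move=> hO [hP [t0 eP]] [hU [t2 eU]] [hV [t3 eV]] UV OU OV.
have [l Pl] := line_affine_comb eP eU eV UV.
by apply: (secant_power hO hP hU hV Pl); [rewrite -OU | rewrite -OV]; rewrite gam_gdist.
Qed.
End Power.

Theorem mainTheorem5 (R : realType) (n : nat) (s : R)
  (hn : (2 <= n)%N) (hs : 0 < s)
  (C1 C2 C3 : 'rV[R]_n) (hPi : is_gyroplane_data s C1 C2 C3)
  (O : 'rV[R]_n) (r : R) (hO : gyroplane s C1 C2 C3 O) (hr : 0 < r)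
  (P : 'rV[R]_n) (hP : gyrocircle_ext s (gyroplane s C1 C2 C3) O r P)
  (a1 d1 : 'rV[R]_n) (hd1 : d1 != 0)
  (A2 A3 : 'rV[R]_n)
  (hPL1 : gyroline s a1 d1 P)
  (hA2L : gyroline s a1 d1 A2) (hA3L : gyroline s a1 d1 A3)
  (hA2 : gyrocircle s (gyroplane s C1 C2 C3) O r A2)
  (hA3 : gyrocircle s (gyroplane s C1 C2 C3) O r A3)
  (hA23 : A2 != A3)
  (a2 d2 : 'rV[R]_n) (hd2 : d2 != 0)
  (B2 B3 : 'rV[R]_n)
  (hPL2 : gyroline s a2 d2 P)
  (hB2L : gyroline s a2 d2 B2) (hB3L : gyroline s a2 d2 B3)
  (hB2 : gyrocircle s (gyroplane s C1 C2 C3) O r B2)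
  (hB3 : gyrocircle s (gyroplane s C1 C2 C3) O r B3)
  (hB23 : B2 != B3) :
  gam s (gdist s P A2) * gdist s P A2 * (gam s (gdist s P A3) * gdist s P A3)
    / (gam s (gdist s A2 A3) + 1)
  = gam s (gdist s P B2) * gdist s P B2 * (gam s (gdist s P B3) * gdist s P B3)
    / (gam s (gdist s B2 B3) + 1).
Proof.
(* Both sides equal the power of P. *)
have hOb : in_ball s O by case: hO.
rewrite (gyrosecant_power hs hOb hPL1 hA2L hA3L hA23 hA2.2 hA3.2).
by rewrite (gyrosecant_power hs hOb hPL2 hB2L hB3L hB23 hB2.2 hB3.2).
Qed.
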